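(* Let $\mathcal{O}$ be a one-counter system with state set $Q$ and let $a\in\mathbb{N}$. There exists a one-counter system $\mathcal{O}_a$ with the same state set $Q$ such that for all $p,q\in Q$ and every $K\in\mathbb{N}$: there is a path of length exactly $K$ from $(p,0)$ to $(q,0)$ in $\mathcal{O}_a$ if and only if there is a path from $(p,a)$ to $(q,a)$ in $\mathcal{O}$ on which exactly $K+1$ of the appearing configurations (counted with multiplicity, i.e., by position along the path) have counter value at least $a$.
   Context: $\mathbb{N}=\{0,1,2,\dots\}$. A one-counter system (OCS) $\mathcal{O}$ consists of a finite set $Q$ of states, a set $T_{>0}\subseteq Q\times\{-1,0,1\}\times Q$ of non-zero transitions and a set $T_{=0}\subseteq Q\times\{0,1\}\times Q$ of zero tests; $T=T_{>0}\cup T_{=0}$. A configuration is a pair $(q,c)\in Q\times\mathbb{N}$, with state $q$ and counter value $c$. A transition $t=(p,d,q)\in T$ can be fired in configuration $(p,c)$ if either $t\in T_{>0}$ and $c>0$, or $t\in T_{=0}$ and $c=0$; the result is $(q,c+d)$, and we write $(p,c)\xrightarrow{t}(q,c+d)$. A path is a sequence $(\gamma_1,t_1)(\gamma_2,t_2)\cdots(\gamma_m,t_m)$ of configurations and transitions such that there are configurations with $\gamma_i\xrightarrow{t_i}\gamma_{i+1}$ for $i=1,\dots,m$; its source is $\gamma_1$, its target is $\gamma_{m+1}$, its length is $m$, the configurations appearing on it are $\gamma_1,\dots,\gamma_{m+1}$, and it is a path from its source to its target. *)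

From HB Require Import structures.
From mathcomp Require Import all_boot all_order all_algebra.
Set Implicit Arguments. Unset Strict Implicit. Unset Printing Implicit Defensive.
Import Order.TTheory GRing.Theory Num.Theory.

(* A one-counter system over a finite state type Q.
   tpos p d q  <=> (p,d,q) \in T_{>0}  (d \in {-1,0,1})
   tzero p d q <=> (p,d,q) \in T_{=0}  (d \in {0,1})                      *)
Record OCS (Q : finType) := MkOCS {
  tpos  : Q -> int -> Q -> bool;
  tzero : Q -> int -> Q -> bool;
  tpos_dom  : forall p d q, tpos p d q -> d \in [:: (-1)%R; 0%R; 1%R];
  tzero_dom : forall p d q, tzero p d q -> d \in [:: 0%R; 1%R]
}.

Inductive trans (Q : finType) :=
| TPos  of Q & int & Q
| TZero of Q & int & Q.

Definition config (Q : finType) := (Q * nat)%type.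

Definition fires (Q : finType) (O : OCS Q) (t : trans Q) (g g' : config Q) : Prop :=
  match t with
  | TPos p d q => [/\ tpos O p d q, g.1 = p, (0 < g.2)%N, g'.1 = q
                    & (g'.2 : int) = (g.2 : int) + d]%R
  | TZero p d q => [/\ tzero O p d q, g.1 = p, g.2 = 0%N, g'.1 = q
                    & (g'.2 : int) = (g.2 : int) + d]%R
  end.

(* run O g ts cs g' : there is a path with source g, target g', sequence of
   transitions ts (its length is size ts), and cs is the list of all
   configurations appearing on it, in order and with multiplicity
   (gamma_1, ..., gamma_{m+1}). *)
Inductive run (Q : finType) (O : OCS Q) :
    config Q -> seq (trans Q) -> seq (config Q) -> config Q -> Prop :=
| run_nil g : run O g [::] [:: g] g
| run_cons g t g1 ts cs g' :
    fires O t g g1 -> run O g1 ts cs g' -> run O g (t :: ts) (g :: cs) g'.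

From mathcomp Require Import all_boot all_order all_algebra.
From mathcomp Require Import zify boolp.
Set Implicit Arguments. Unset Strict Implicit. Unset Printing Implicit Defensive.

(* A configuration (r, c) of O_a stands for (r, a + c) of O.  The non-zero
   transitions of O are kept; a zero test of O_a from r either climbs to
   (r', a + 1) in one step of O, or summarises a whole excursion of O from
   (r, a) to (r', a) that stays strictly below a in between.  Each
   configuration of an O_a-path is then one configuration of the O-path at
   height >= a, and the configurations inside the excursions are exactly
   those below a.  Conversely, an O-path at height >= a is cut at its first
   returns to level a, by strong induction on its length. *)

Section RunFacts.
Variables (Q : finType) (O : OCS Q).

Lemma fires_counter_step t g g' :
  fires O t g g' -> (g.2 <= g'.2 + 1)%N /\ (g'.2 <= g.2 + 1)%N.
Proof.
case: t => p d q /= [H _ _ _ E].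
- by move: (tpos_dom H); rewrite !inE => /or3P[] /eqP Ed; subst d; lia.
- by move: (tzero_dom H); rewrite !inE => /orP[] /eqP Ed; subst d; lia.
Qed.

Lemma run_configs_head g ts cs g' : run O g ts cs g' -> cs = g :: behead cs.
Proof. by case. Qed.

Lemma run_cat g ts cs h ts' cs' g' :
  run O g ts cs h -> run O h ts' (h :: cs') g' ->
  run O g (ts ++ ts') (cs ++ cs') g'.
Proof.
elim=> [//|x t x1 ts0 cs0 x' F _ IH] R'.
exact: run_cons F (IH R').
Qed.

Lemma run_first_reach g ts cs g' (a : nat) :
  run O g ts cs g' -> (g.2 < a)%N -> (a <= g'.2)%N ->
  exists ts1 cs1 ts2 cs2 h,
    [/\ h.2 = a, run O g ts1 (cs1 ++ [:: h]) h,
        all (fun x : config Q => (x.2 < a)%N) cs1, run O h ts2 cs2 g'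
      & size ts = (size ts1 + size ts2)%N /\ cs = cs1 ++ cs2].
Proof.
elim=> [x|x t x1 ts0 cs0 x' F R IH] Hx Hx'.
  by move: (leq_ltn_trans Hx' Hx); rewrite ltnn.
have [B1 B2] := fires_counter_step F.
case: (ltnP x1.2 a) => H1.
- have [ts1 [cs1 [ts2 [cs2 [h [Eh R1 A R2 [S C]]]]]]] := IH H1 Hx'.
  exists (t :: ts1), (x :: cs1), ts2, cs2, h.
  by split; [|exact: run_cons F R1|rewrite /= Hx A|..|rewrite /= S C].
- exists [:: t], [:: x], ts0, cs0, x1.
  by split; [lia|exact: run_cons F (run_nil _ _)|rewrite /= Hx andbT|..].
Qed.

End RunFacts.

Section LevelShift.
Variables (Q : finType) (O : OCS Q) (a : nat).

Definition high (g : config Q) : bool := (a <= g.2)%N.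

Lemma count_high_below (cs : seq (config Q)) :
  all (fun g : config Q => (g.2 < a)%N) cs -> count high cs = 0%N.
Proof. by elim: cs => //= g cs IH /andP[lt_ga /IH ->]; rewrite /high leqNgt lt_ga. Qed.

Definition excursion (r r' : Q) : Prop :=
  exists ts cs, run O (r, a) ts ((r, a) :: cs ++ [:: (r', a)]) (r', a)
    /\ all (fun g : config Q => (g.2 < a)%N) cs.

Definition climb (r r' : Q) : Prop := exists t, fires O t (r, a) (r', a.+1).

Definition shift_tzero (r : Q) (d : int) (r' : Q) : bool :=
  ((d == 0%R) && `[< excursion r r' >]) || ((d == 1%R) && `[< climb r r' >]).

Lemma shift_tzero_dom r d r' : shift_tzero r d r' -> d \in [:: 0%R; 1%R].
Proof. by case/orP=> /andP[/eqP -> _]. Qed.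

Definition shift_ocs : OCS Q := MkOCS (@tpos_dom Q O) shift_tzero_dom.

Lemma shift_run_sound g ts cs g' : run shift_ocs g ts cs g' ->
  exists ts' cs', run O (g.1, a + g.2)%N ts' cs' (g'.1, a + g'.2)%N
    /\ count high cs' = (size ts).+1.
Proof.
elim=> [[r c]|[r c] t [r1 c1] ts0 cs0 g'' F _ [ts' [cs' [R' C']]]].
  by exists [::], [:: (r, a + c)%N]; split; [exact: run_nil|rewrite /= /high leq_addr].
case: t F => p d p' /= [H Ep H0 Ep' E]; subst p p'.
- exists (TPos r d r1 :: ts'), ((r, a + c)%N :: cs'); split.
    by apply: run_cons R'; split=> //=; lia.
  by rewrite /= /high leq_addr C'.
- subst c; case/orP: H => /andP[/eqP Ed /asboolP Hs]; subst d.
  + have Ec1 : c1 = 0%N by lia.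
    subst c1.
    move: R' C'; rewrite /= !addn0 => R' C'.
    case: Hs => ts1 [cs1 [R1 below]].
    have := run_configs_head R'.
    case: cs' R' C' => // h cs' R' C' [Eh]; subst h.
    exists (ts1 ++ ts'), (((r, a) :: cs1 ++ [:: (r1, a)]) ++ cs'); split.
      exact: run_cat R1 R'.
    rewrite /= /high leqnn in C'.
    by rewrite /= -catA count_cat count_high_below //= /high leqnn C'.
  + have Ec1 : c1 = 1%N by lia.
    subst c1.
    move: R' C'; rewrite /= addn0 addn1 => R' C'.
    case: Hs => t Ft.
    exists (t :: ts'), ((r, a) :: cs'); split; first exact: run_cons Ft R'.
    by rewrite /= /high leqnn C'.
Qed.

Lemma shift_fires t p c p' c' : fires O t (p, c) (p', c') ->
  (a <= c)%N -> (a <= c')%N ->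
  exists t', fires shift_ocs t' (p, c - a)%N (p', c' - a)%N.
Proof.
move=> F le_ac le_ac'; have /= [B1 B2] := fires_counter_step F.
case: (ltnP a c) => lt_ac.
  case: t F => p0 d p0' /= [H Ep H0 Ep' E]; subst p0 p0'; last by lia.
  by exists (TPos p d p'); split=> //=; lia.
have Ec : c = a by lia.
subst c; rewrite subnn.
have [Ec'|Ec'] : c' = a \/ c' = a.+1 by lia.
- subst c'; exists (TZero p 0%R p'); split=> //=; last by rewrite subnn.
  rewrite /shift_tzero eqxx; apply/orP; left; apply/asboolP.
  by exists [:: t], [::]; split=> //; exact: run_cons F (run_nil _ _).
- subst c'; exists (TZero p 1%R p'); split=> //=; last by lia.
  rewrite /shift_tzero; apply/orP; right; apply/andP; split=> //.
  by apply/asboolP; exists t.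
Qed.

Lemma shift_run_complete g ts cs g' : run O g ts cs g' ->
  (a <= g.2)%N -> (a <= g'.2)%N ->
  exists ts' cs', run shift_ocs (g.1, g.2 - a)%N ts' cs' (g'.1, g'.2 - a)%N
    /\ (size ts').+1 = count high cs.
Proof.
have [n] := ubnP (size ts); elim: n => // n IHn in g ts cs g' *.
move=> lt_ts R le_ag le_ag'.
case: R lt_ts le_ag le_ag' => [[p c]|[p c] t [p1 c1] ts0 cs0 g'' F R0] /= lt_ts le_ac le_ag'.
  by exists [::], [:: (p, c - a)%N]; split; [exact: run_nil|rewrite /= /high le_ac].
case: (ltnP c1 a) => lt_c1a.
- have /= [B1 B2] := fires_counter_step F.
  have Ec : c = a by lia.
  subst c.
  have [ts1 [cs1 [ts2 [cs2 [[h hc] [/= Ehc R1 below R2 [Sz ->]]]]]]] :=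
    run_first_reach R0 lt_c1a le_ag'.
  subst hc.
  have [|ts' [cs' [Ra C]]] := IHn _ _ _ _ _ R2 (leqnn a) le_ag'.
    by move: lt_ts; rewrite /= Sz; lia.
  exists (TZero p 0%R h :: ts'), ((p, a - a)%N :: cs'); split.
    apply: run_cons Ra; rewrite /= subnn; split=> //.
    rewrite /shift_tzero eqxx; apply/orP; left; apply/asboolP.
    by exists (t :: ts1), cs1; split=> //; exact: run_cons F R1.
  by rewrite /= /high leqnn count_cat count_high_below //= C.
- have [//|ts' [cs' [Ra C]]] := IHn _ _ _ _ _ R0 lt_c1a le_ag'.
  have [t' F'] := shift_fires F le_ac lt_c1a.
  exists (t' :: ts'), ((p, c - a)%N :: cs'); split; first exact: run_cons F' Ra.
  by rewrite /= /high le_ac -C.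
Qed.

End LevelShift.

Theorem mainTheorem13 (Q : finType) (O : OCS Q) (a : nat) :
  exists Oa : OCS Q,
    forall (p q : Q) (K : nat),
      (exists ts cs, run Oa (p, 0%N) ts cs (q, 0%N) /\ size ts = K)
      <->
      (exists ts cs, run O (p, a) ts cs (q, a) /\
                     count (fun g : config Q => (a <= g.2)%N) cs = K.+1).
Proof.
exists (shift_ocs O a) => p q K; split.
- case=> ts [cs [R <-]].
  have [ts' [cs' [R' C]]] := shift_run_sound R.
  by exists ts', cs'; rewrite /= !addn0 in R'.
- case=> ts [cs [R C]].
  have [ts' [cs' [R' C']]] := shift_run_complete R (leqnn a) (leqnn a).
  rewrite /= subnn in R'.
  by exists ts', cs'; split=> //; apply/succn_inj; rewrite C' -C.
Qed.
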